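(* Assume $\Lambda>0$. Let $\Omega_{\mathrm{adm}}$ be the set of initial data $V_0=(g^0,K^0,F^0,E^0,U^0,\theta^0,\rho_0,e_0)$ with $g^0$ symmetric positive definite, $K^0$ symmetric, $F^0$ antisymmetric, $E^0,U^0\in\mathbb{R}^3$, $\theta^0\in\mathbb{R}^4$, $\rho_0>0$, $e_0>0$, satisfying the constraints (C1)–(C4) at $t=0$ and $H(0)=g^{0,ij}K^0_{ij}<0$, and for $V_0\in\Omega_{\mathrm{adm}}$ let $S(V_0,\cdot):[0,\infty)\to\mathbb{R}^{31}$ denote the corresponding unique global $C^1$ solution of the evolution system (S) (with $\Theta^{00}\ge0$ along solutions). Then the Cauchy problem is well-posed in the sense of Hadamard: the map $V_0\mapsto S(V_0,\cdot)$ is continuous from $\Omega_{\mathrm{adm}}$ (with the topology induced from the finite-dimensional space of data) into $C([0,\infty);\mathbb{R}^{31})$ endowed with the topology of uniform convergence on compact subsets, i.e. generated by the seminorms $P_{[0,T]}(\varphi)=\sup_{t\in[0,T]}|\varphi(t)|_1$, $T>0$, where $|W|_1=\sum_i|W_i|$.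
   Context: Setting. $G$ is a three-dimensional connected Lie group of Bianchi type I–VIII, $(e_i)_{i=1,2,3}$ a left-invariant frame with structure constants $C^k_{ij}$ defined by $[e_i,e_j]=C^k_{ij}e_k$ (so $C^k_{ij}=-C^k_{ji}$ and the Jacobi identity holds). $\Lambda\in\mathbb{R}$ is a constant. Latin indices run over $1,2,3$; repeated indices are summed. Unknowns (functions of $t$): a symmetric positive definite matrix $g=(g_{ij})$ with inverse $(g^{ij})$; a symmetric matrix $K=(K_{ij})$; an antisymmetric matrix $F=(F_{ij})$; vectors $E=(E^i)$, $u=(u^i)$; $\Theta=(\Theta^{00},\Theta^{0i})$; a function $\rho>0$; a function $e\ge0$. The state vector $(g,K,F,E,u,\Theta,\rho,e)$ is regarded as an element of $\mathbb{R}^{31}$ via the entries of all components. Derived quantities: $u^0=\sqrt{1+g_{ij}u^iu^j}$, $u_i=g_{ij}u^j$; $H=g^{ij}K_{ij}$; $K^i_j=g^{ik}K_{kj}$, $K^{ij}=g^{ik}g^{jl}K_{kl}$; $F^{ij}=g^{ik}g^{jl}F_{kl}$; $\gamma^l_{ij}=\tfrac12 g^{lk}(-C^m_{jk}g_{im}+C^m_{ki}g_{jm}+C^m_{ij}g_{km})$; $R_{ij}=\gamma^l_{lm}\gamma^m_{ji}-\gamma^m_{jl}\gamma^l_{mi}-C^l_{mj}\gamma^m_{li}$, $R=g^{ij}R_{ij}$; $\tau_{00}=\tfrac12 g_{ij}E^iE^j+\tfrac14 g^{ik}g^{jl}F_{kl}F_{ij}$, $\tau_{0j}=-E^kF_{jk}$,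 $\tau_{ij}=(\tfrac12 g_{ij}g_{kl}-g_{ik}g_{jl})E^kE^l-\tfrac14 g_{ij}g^{km}g^{nl}F_{kl}F_{mn}+g^{kl}F_{ik}F_{jl}$; $\Theta_{00}=\Theta^{00}$, $\Theta_{0j}=-g_{jk}\Theta^{0k}$; $T_{00}=\tfrac43\rho(u^0)^2+\Theta_{00}$, $T_{0j}=-\tfrac43\rho u^0u_j+\Theta_{0j}$, $T_{ij}=\tfrac43\rho u_iu_j+\tfrac13\rho g_{ij}$; $\nabla$ is the Levi-Civita connection of the left-invariant metric $g$, so for left-invariant tensors $\nabla_kK_{ij}=-\gamma^l_{ki}K_{lj}-\gamma^l_{kj}K_{il}$ and $\nabla^iK_{ij}=g^{ik}\nabla_kK_{ij}$. Evolution system (S) (dot $=d/dt$): $\dot g_{ij}=-2K_{ij}$; $\dot K_{ij}=R_{ij}+HK_{ij}-2K^l_jK_{il}-8\pi(\tau_{ij}+T_{ij})+4\pi(-T_{00}+g^{lm}T_{lm})g_{ij}-\Lambda g_{ij}$; $\dot F_{ij}=C^k_{ij}g_{kl}E^l$; $\dot E^i=HE^i-C^j_{jk}E^k\frac{u^i}{u^0}-C^j_{jk}g^{kl}g^{im}F_{lm}-\tfrac12 C^i_{jk}g^{jl}g^{km}F_{lm}$; $\dot u^i=2K^i_ju^j-\gamma^i_{jk}\frac{u^ju^k}{u^0}+\frac{3}{4\rho u^0}C^j_{jk}E^kE^i-\frac{3}{4\rho(u^0)^2}C^j_{jk}E^kg^{il}F_{ml}u^m$; $\dot\Theta^{00}=H\Theta^{00}-C^i_{ij}\Theta^{0j}+\tfrac13\rho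 H+\rho u^0$; $\dot\Theta^{0i}=H\Theta^{0i}+2K^i_j\Theta^{0j}-\tfrac{\rho}{3}(C^k_{kj}g^{ij}+\gamma^i_{jk}g^{jk})+\rho u^i$; $\dot\rho=-\big(\frac{3}{4u^0}+K_{ij}\frac{u^iu^j}{(u^0)^2}-H+C^i_{ij}\frac{u^j}{u^0}\big)\rho-\tfrac34 g_{il}C^j_{jk}E^kE^l\frac{u^i}{(u^0)^3}$; $\dot e=-\big(K_{ij}\frac{u^iu^j}{(u^0)^2}+C^i_{ik}\frac{u^k}{u^0}-H\big)e+\tfrac34 g_{ij}\frac{u^iE^j}{(u^0)^2}\frac{e^2}{\rho}$. Constraints: (C1) $R-K_{ij}K^{ij}+H^2=16\pi(\tau_{00}+T_{00})+2\Lambda$; (C2) $\nabla^iK_{ij}=-8\pi(\tau_{0j}+T_{0j})$; (C3) $C^l_{ij}F_{kl}+C^l_{jk}F_{il}+C^l_{ki}F_{jl}=0$; (C4) $C^i_{ik}E^k+eu^0=0$. Model assumption: $\Theta^{00}\ge0$. For Bianchi types I–VIII the scalar curvature satisfies $R\le0$. For $\Lambda>0$ and admissible data a unique global solution exists on $[0,\infty)$. *)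

From Stdlib Require Import Reals Lra Lia.
Open Scope R_scope.

(* Indices 1,2,3 of the paper are encoded as 0,1,2 (nat). *)
Definition sum3 (f : nat -> R) : R := f 0%nat + f 1%nat + f 2%nat.

(* Structure constants: Cs k i j = C^k_{ij}, i.e. [e_i,e_j] = C^k_{ij} e_k. *)
Definition StructConst := nat -> nat -> nat -> R.

Definition sc_antisym (C : StructConst) : Prop :=
  forall k i j, (k < 3)%nat -> (i < 3)%nat -> (j < 3)%nat -> C k i j = - C k j i.

Definition sc_jacobi (C : StructConst) : Prop :=
  forall i j k m, (i < 3)%nat -> (j < 3)%nat -> (k < 3)%nat -> (m < 3)%nat ->
    sum3 (fun l => C l i j * C m l k + C l j k * C m l i + C l k i * C m l j) = 0.

Definition levi (i j k : nat) : R :=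
  match i, j, k with
  | O, S O, S (S O) => 1 | S O, S (S O), O => 1 | S (S O), O, S O => 1
  | O, S (S O), S O => -1 | S (S O), S O, O => -1 | S O, O, S (S O) => -1
  | _, _, _ => 0
  end.

(* Bianchi type IX: in some basis e'_i = A_i^a e_a the structure constants are
   C'^k_{ij} = eps_{ijk} (Lie algebra so(3) ~ su(2)). Here B = A^{-1}
   (e_c = B_c^k e'_k), and C'^k_{ij} = A_i^a A_j^b C^c_{ab} B_c^k. *)
Definition bianchi_IX (C : StructConst) : Prop :=
  exists A B : nat -> nat -> R,
    (forall c a, (c < 3)%nat -> (a < 3)%nat ->
        sum3 (fun k => B c k * A k a) = if Nat.eqb c a then 1 else 0) /\
    (forall i j k, (i < 3)%nat -> (j < 3)%nat -> (k < 3)%nat ->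
        sum3 (fun a => sum3 (fun b => sum3 (fun c => A i a * A j b * C c a b * B c k)))
        = levi i j k).

(* Bianchi types I--VIII: every three-dimensional real Lie algebra is of Bianchi
   type I--IX; types I--VIII are exactly those not of type IX. *)
Definition bianchi_I_to_VIII (C : StructConst) : Prop :=
  sc_antisym C /\ sc_jacobi C /\ ~ bianchi_IX C.

(* The entries of all components are stored as a map
   nat -> R, using coordinates 0..38:
     g_{ij} : 3i+j,  K_{ij} : 9+3i+j,  F_{ij} : 18+3i+j,  E^i : 27+i,
     u^i : 30+i,  Theta^{00} : 33,  Theta^{0i} : 34+i,  rho : 37,  e : 38.
   (Full 3x3 matrices are stored.) *)
Definition st := nat -> R.
Definition ncoord : nat := 39.

Definition sg   (V : st) (i j : nat) : R := V (3*i+j)%nat.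
Definition sK   (V : st) (i j : nat) : R := V (9+3*i+j)%nat.
Definition sF   (V : st) (i j : nat) : R := V (18+3*i+j)%nat.
Definition sE   (V : st) (i : nat) : R := V (27+i)%nat.
Definition su   (V : st) (i : nat) : R := V (30+i)%nat.
Definition sT00 (V : st) : R := V 33%nat.
Definition sT0  (V : st) (i : nat) : R := V (34+i)%nat.
Definition srho (V : st) : R := V 37%nat.
Definition se   (V : st) : R := V 38%nat.

Definition norm1 (W : st) : R := sum_f_R0 (fun k => Rabs (W k)) (ncoord - 1).
Definition dist1 (W V : st) : R := norm1 (fun k => W k - V k).

Definition cof (g : nat -> nat -> R) (i j : nat) : R :=
  let i1 := ((i+1) mod 3)%nat in let i2 := ((i+2) mod 3)%nat in
  let j1 := ((j+1) mod 3)%nat in let j2 := ((j+2) mod 3)%nat in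
  g i1 j1 * g i2 j2 - g i1 j2 * g i2 j1.
Definition det3 (g : nat -> nat -> R) : R := sum3 (fun j => g 0%nat j * cof g 0%nat j).
Definition inv3 (g : nat -> nat -> R) (i j : nat) : R := cof g j i / det3 g.

Definition sym3 (M : nat -> nat -> R) : Prop :=
  forall i j, (i < 3)%nat -> (j < 3)%nat -> M i j = M j i.
Definition antisym3 (M : nat -> nat -> R) : Prop :=
  forall i j, (i < 3)%nat -> (j < 3)%nat -> M i j = - M j i.
Definition posdef3 (M : nat -> nat -> R) : Prop :=
  sym3 M /\
  forall x : nat -> R, (x 0%nat <> 0 \/ x 1%nat <> 0 \/ x 2%nat <> 0) ->
    0 < sum3 (fun i => sum3 (fun j => M i j * x i * x j)).

Section Derived.
Variable (C : StructConst) (Lam : R) (V : st).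

Definition g_ (i j : nat) := sg V i j.
Definition gi (i j : nat) := inv3 (sg V) i j.
Definition K_ (i j : nat) := sK V i j.
Definition F_ (i j : nat) := sF V i j.
Definition E_ (i : nat) := sE V i.
Definition u_ (i : nat) := su V i.
Definition rho_ := srho V.
Definition e_ := se V.

Definition u0 : R := sqrt (1 + sum3 (fun i => sum3 (fun j => g_ i j * u_ i * u_ j))).
Definition ulow (i : nat) : R := sum3 (fun j => g_ i j * u_ j).
Definition Hm : R := sum3 (fun i => sum3 (fun j => gi i j * K_ i j)).
Definition Kud (i j : nat) : R := sum3 (fun k => gi i k * K_ k j).
Definition Kuu (i j : nat) : R :=
  sum3 (fun k => sum3 (fun l => gi i k * gi j l * K_ k l)).
Definition gam (l i j : nat) : R :=
  / 2 * sum3 (fun k => gi l k *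
     (- sum3 (fun m => C m j k * g_ i m) + sum3 (fun m => C m k i * g_ j m)
      + sum3 (fun m => C m i j * g_ k m))).
Definition Ric (i j : nat) : R :=
  sum3 (fun l => sum3 (fun m => gam l l m * gam m j i))
  - sum3 (fun l => sum3 (fun m => gam m j l * gam l m i))
  - sum3 (fun l => sum3 (fun m => C l m j * gam m l i)).
Definition Rsc : R := sum3 (fun i => sum3 (fun j => gi i j * Ric i j)).

Definition tau00 : R :=
  / 2 * sum3 (fun i => sum3 (fun j => g_ i j * E_ i * E_ j))
  + / 4 * sum3 (fun i => sum3 (fun j => sum3 (fun k => sum3 (fun l =>
            gi i k * gi j l * F_ k l * F_ i j)))).
Definition tau0 (j : nat) : R := - sum3 (fun k => E_ k * F_ j k).
Definition tau (i j : nat) : R :=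
  sum3 (fun k => sum3 (fun l => (/ 2 * g_ i j * g_ k l - g_ i k * g_ j l) * E_ k * E_ l))
  - / 4 * g_ i j * sum3 (fun k => sum3 (fun l => sum3 (fun m => sum3 (fun n =>
            gi k m * gi n l * F_ k l * F_ m n))))
  + sum3 (fun k => sum3 (fun l => gi k l * F_ i k * F_ j l)).

Definition Th00low : R := sT00 V.
Definition Th0low (j : nat) : R := - sum3 (fun k => g_ j k * sT0 V k).
Definition T00 : R := 4 / 3 * rho_ * u0 ^ 2 + Th00low.
Definition T0 (j : nat) : R := - (4 / 3) * rho_ * u0 * ulow j + Th0low j.
Definition Tij (i j : nat) : R := 4 / 3 * rho_ * ulow i * ulow j + / 3 * rho_ * g_ i j.

Definition dg (i j : nat) : R := - 2 * K_ i j.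
Definition dK (i j : nat) : R :=
  Ric i j + Hm * K_ i j - 2 * sum3 (fun l => Kud l j * K_ i l)
  - 8 * PI * (tau i j + Tij i j)
  + 4 * PI * (- T00 + sum3 (fun l => sum3 (fun m => gi l m * Tij l m))) * g_ i j
  - Lam * g_ i j.
Definition dF (i j : nat) : R := sum3 (fun k => sum3 (fun l => C k i j * g_ k l * E_ l)).
Definition dE (i : nat) : R :=
  Hm * E_ i
  - sum3 (fun j => sum3 (fun k => C j j k * E_ k)) * u_ i / u0
  - sum3 (fun j => sum3 (fun k => sum3 (fun l => sum3 (fun m =>
        C j j k * gi k l * gi i m * F_ l m))))
  - / 2 * sum3 (fun j => sum3 (fun k => sum3 (fun l => sum3 (fun m =>
        C i j k * gi j l * gi k m * F_ l m)))).
Definition du (i : nat) : R :=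
  2 * sum3 (fun j => Kud i j * u_ j)
  - sum3 (fun j => sum3 (fun k => gam i j k * u_ j * u_ k)) / u0
  + 3 / (4 * rho_ * u0) * sum3 (fun j => sum3 (fun k => C j j k * E_ k)) * E_ i
  - 3 / (4 * rho_ * u0 ^ 2) *
      sum3 (fun j => sum3 (fun k => sum3 (fun l => sum3 (fun m =>
        C j j k * E_ k * gi i l * F_ m l * u_ m)))).
Definition dT00 : R :=
  Hm * sT00 V - sum3 (fun i => sum3 (fun j => C i i j * sT0 V j))
  + / 3 * rho_ * Hm + rho_ * u0.
Definition dT0 (i : nat) : R :=
  Hm * sT0 V i + 2 * sum3 (fun j => Kud i j * sT0 V j)
  - rho_ / 3 * (sum3 (fun j => sum3 (fun k => C k k j * gi i j))
                + sum3 (fun j => sum3 (fun k => gam i j k * gi j k)))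
  + rho_ * u_ i.
Definition drho : R :=
  - (3 / (4 * u0) + sum3 (fun i => sum3 (fun j => K_ i j * u_ i * u_ j)) / u0 ^ 2 - Hm
     + sum3 (fun i => sum3 (fun j => C i i j * u_ j)) / u0) * rho_
  - 3 / 4 * sum3 (fun i => sum3 (fun l => sum3 (fun j => sum3 (fun k =>
        g_ i l * C j j k * E_ k * E_ l * u_ i)))) / u0 ^ 3.
Definition de : R :=
  - (sum3 (fun i => sum3 (fun j => K_ i j * u_ i * u_ j)) / u0 ^ 2
     + sum3 (fun i => sum3 (fun k => C i i k * u_ k)) / u0 - Hm) * e_
  + 3 / 4 * sum3 (fun i => sum3 (fun j => g_ i j * u_ i * E_ j)) / u0 ^ 2 * (e_ ^ 2 / rho_).

Definition constr_C1 : Prop :=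
  Rsc - sum3 (fun i => sum3 (fun j => K_ i j * Kuu i j)) + Hm ^ 2
  = 16 * PI * (tau00 + T00) + 2 * Lam.
Definition divK (j : nat) : R :=
  sum3 (fun i => sum3 (fun k => gi i k *
    (- sum3 (fun l => gam l k i * K_ l j) - sum3 (fun l => gam l k j * K_ i l)))).
Definition constr_C2 : Prop :=
  forall j, (j < 3)%nat -> divK j = - 8 * PI * (tau0 j + T0 j).
Definition constr_C3 : Prop :=
  forall i j k, (i < 3)%nat -> (j < 3)%nat -> (k < 3)%nat ->
    sum3 (fun l => C l i j * F_ k l + C l j k * F_ i l + C l k i * F_ j l) = 0.
Definition constr_C4 : Prop :=
  sum3 (fun i => sum3 (fun k => C i i k * E_ k)) + e_ * u0 = 0.

End Derived.

Definition vf (C : StructConst) (Lam : R) (V : st) (k : nat) : R :=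
  if (k <? 9)%nat then dg V (k / 3) (k mod 3)
  else if (k <? 18)%nat then dK C Lam V ((k - 9) / 3) ((k - 9) mod 3)
  else if (k <? 27)%nat then dF C V ((k - 18) / 3) ((k - 18) mod 3)
  else if (k <? 30)%nat then dE C V (k - 27)
  else if (k <? 33)%nat then du C V (k - 30)
  else if (k =? 33)%nat then dT00 C V
  else if (k <? 37)%nat then dT0 C V (k - 34)
  else if (k =? 37)%nat then drho C V
  else if (k =? 38)%nat then de C V
  else 0.

Definition admissible (C : StructConst) (Lam : R) (V : st) : Prop :=
  posdef3 (sg V) /\ sym3 (sK V) /\ antisym3 (sF V) /\
  0 < srho V /\ 0 < se V /\
  constr_C1 C Lam V /\ constr_C2 C V /\ constr_C3 C V /\ constr_C4 C V /\
  Hm V < 0.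

(* phi : [0,oo) -> R^n is a global C^1 solution of (S) with phi(0) = V0
   (continuous on [0,oo), differentiable on (0,oo) with phi' = vf(phi),
   staying in the domain g posdef, rho > 0 where (S) is defined). *)
Definition global_solution (C : StructConst) (Lam : R) (phi : R -> st) (V0 : st) : Prop :=
  (forall k, (k < ncoord)%nat -> phi 0 k = V0 k) /\
  (forall t, 0 <= t -> posdef3 (sg (phi t)) /\ 0 < srho (phi t)) /\
  (forall k t, (k < ncoord)%nat -> 0 <= t ->
     forall eps, 0 < eps -> exists delta, 0 < delta /\
       forall s, 0 <= s -> Rabs (s - t) < delta -> Rabs (phi s k - phi t k) < eps) /\
  (forall k t, (k < ncoord)%nat -> 0 < t ->
     derivable_pt_lim (fun s => phi s k) t (vf C Lam (phi t) k)).

(* The right-hand side of (S) is built from the entries of the state by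
   sums, products, quotients and one square root (u^0); its denominators
   det g, rho and u^0 stay away from zero near any state with g positive
   definite and rho > 0, so it is locally Lipschitz for |.|_1 there.  While
   two solutions stay in such a Lipschitz ball, a Gronwall estimate for their
   squared Euclidean distance bounds their |.|_1 distance by a multiple of the
   initial one.  Continuity on [0,T] then follows by real induction along the
   reference solution, with a second real induction keeping the perturbed
   solution inside the ball. *)

From Stdlib Require Import Reals Lra Lia Classical.
From Coquelicot Require Coquelicot.
Open Scope R_scope.

Lemma sum_f_R0_le_term (f : nat -> R) n k :
  (forall i, 0 <= f i) -> (k <= n)%nat -> f k <= sum_f_R0 f n.
Proof.
  intros Hf; induction n as [|n IH]; intros Hk; simpl.
  - replace k with 0%nat by lia; lra.
  - pose proof (Hf (S n)); pose proof (cond_pos_sum f n Hf).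
    destruct (Nat.eq_dec k (S n)) as [->|Hne]; [lra|].
    pose proof (IH ltac:(lia)); lra.
Qed.

Lemma Rabs_mult_self x : Rabs x * Rabs x = x * x.
Proof. rewrite <- Rabs_mult; apply Rabs_pos_eq; nra. Qed.

Lemma sum_sqr_le_sqr_sum_abs (a : nat -> R) n :
  sum_f_R0 (fun k => a k * a k) n <= sum_f_R0 (fun k => Rabs (a k)) n ^ 2.
Proof.
  induction n as [|n IH]; simpl sum_f_R0.
  - pose proof (Rabs_mult_self (a 0%nat)); nra.
  - pose proof (cond_pos_sum (fun k => Rabs (a k)) n (fun k => Rabs_pos (a k))).
    pose proof (Rabs_pos (a (S n))); pose proof (Rabs_mult_self (a (S n))); nra.
Qed.

(* Cauchy-Schwarz for the vectors (|a_k|)_k and (1)_k. *)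
Lemma sqr_sum_abs_le (a : nat -> R) n :
  sum_f_R0 (fun k => Rabs (a k)) n ^ 2 <= INR (S n) * sum_f_R0 (fun k => a k * a k) n.
Proof.
  induction n as [|n IH]; simpl sum_f_R0.
  - simpl; pose proof (Rabs_mult_self (a 0%nat)); nra.
  - set (s := sum_f_R0 (fun k => Rabs (a k)) n) in *.
    set (q := sum_f_R0 (fun k => a k * a k) n) in *.
    set (b := a (S n)).
    assert (Hcross : 2 * Rabs b * s <= q + INR (S n) * (b * b)).
    { assert (Hterm : sum_f_R0 (fun k => Rabs (a k) * (2 * Rabs b)) n
                      <= sum_f_R0 (fun k => a k * a k + b * b) n).
      { apply sum_Rle; intros k _.
        pose proof (Rabs_mult_self (a k)); pose proof (Rabs_mult_self b).
        pose proof (Rle_0_sqr (Rabs (a k) - Rabs b)); unfold Rsqr in *; nra. }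
      rewrite <- scal_sum, plus_sum, sum_cte in Hterm; fold s q in Hterm; lra. }
    rewrite S_INR; pose proof (Rabs_mult_self b); nra.
Qed.

Lemma sum_mul_le_mul_sum_abs (x y : nat -> R) n :
  sum_f_R0 (fun k => x k * y k) n
  <= sum_f_R0 (fun k => Rabs (x k)) n * sum_f_R0 (fun k => Rabs (y k)) n.
Proof.
  rewrite scal_sum; apply sum_Rle; intros k Hk.
  pose proof (sum_f_R0_le_term (fun k => Rabs (x k)) n k (fun i => Rabs_pos _) Hk).
  pose proof (Rabs_pos (y k)).
  apply Rle_trans with (Rabs (y k) * Rabs (x k)).
  - rewrite <- Rabs_mult, Rmult_comm; apply Rle_abs.
  - apply Rmult_le_compat_l; lra.
Qed.

Lemma dist1_nonneg W V : 0 <= dist1 W V.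
Proof. apply cond_pos_sum; intros; apply Rabs_pos. Qed.

Lemma dist1_refl W : dist1 W W = 0.
Proof.
  unfold dist1, norm1; rewrite (sum_eq _ (fun _ => 0)), sum_cte; [ring|].
  intros; rewrite Rminus_diag; apply Rabs_R0.
Qed.

Lemma dist1_sym W V : dist1 W V = dist1 V W.
Proof. apply sum_eq; intros; apply Rabs_minus_sym. Qed.

Lemma dist1_triangle W U V : dist1 W V <= dist1 W U + dist1 U V.
Proof.
  unfold dist1, norm1; rewrite <- plus_sum; apply sum_Rle; intros k _.
  replace (W k - V k) with ((W k - U k) + (U k - V k)) by ring; apply Rabs_triang.
Qed.

Lemma dist1_coord W V k : (k < ncoord)%nat -> Rabs (W k - V k) <= dist1 W V.
Proof.
  intros Hk; apply (sum_f_R0_le_term (fun k => Rabs (W k - V k)));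
    [intros; apply Rabs_pos | unfold ncoord in *; lia].
Qed.

Lemma dist1_ext W W' V V' : (forall k, (k < ncoord)%nat -> W k = W' k /\ V k = V' k) ->
  dist1 W V = dist1 W' V'.
Proof.
  intros H; apply sum_eq; intros k Hk.
  destruct (H k ltac:(unfold ncoord in *; simpl in *; lia)) as [-> ->]; reflexivity.
Qed.

Definition lipschitz_on (f : st -> R) (V : st) (r L : R) : Prop :=
  forall W W', dist1 W V < r -> dist1 W' V < r -> Rabs (f W - f W') <= L * dist1 W W'.

Definition locally_lipschitz (f : st -> R) (V : st) : Prop :=
  exists r L, 0 < r /\ 0 <= L /\ lipschitz_on f V r L.

Lemma lipschitz_on_le f V r r' L : r' <= r -> lipschitz_on f V r L -> lipschitz_on f V r' L.
Proof. intros Hr Hf W W' HW HW'; apply Hf; lra. Qed.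

Lemma locally_lipschitz_ball f V m : locally_lipschitz f V -> 0 < m ->
  exists r L, 0 < r /\ 0 <= L /\ lipschitz_on f V r L /\
    forall W, dist1 W V < r -> Rabs (f W - f V) <= m.
Proof.
  intros (r0 & L & Hr0 & HL & Hf) Hm.
  set (r := Rmin r0 (m / (L + 1))).
  assert (Hr : 0 < r) by (apply Rmin_pos; [lra | apply Rdiv_lt_0_compat; lra]).
  assert (Hrr0 : r <= r0) by apply Rmin_l.
  assert (Hrm : r * (L + 1) <= m).
  { apply Rle_trans with (m / (L + 1) * (L + 1)); [apply Rmult_le_compat_r, Rmin_r; lra|].
    right; field; lra. }
  exists r, L; repeat split; auto.
  - exact (lipschitz_on_le f V r0 r L Hrr0 Hf).
  - intros W HW.
    assert (HV : dist1 V V < r0) by (rewrite dist1_refl; lra).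
    pose proof (Hf W V ltac:(lra) HV); pose proof (dist1_nonneg W V).
    assert (L * dist1 W V <= L * r) by (apply Rmult_le_compat_l; lra).
    nra.
Qed.

Lemma locally_lipschitz_const c V : locally_lipschitz (fun _ => c) V.
Proof.
  exists 1, 0; repeat split; try lra; intros W W' _ _.
  rewrite Rminus_diag, Rabs_R0; lra.
Qed.

Lemma locally_lipschitz_coord k V : (k < ncoord)%nat -> locally_lipschitz (fun W => W k) V.
Proof.
  intros Hk; exists 1, 1; repeat split; try lra; intros W W' _ _.
  rewrite Rmult_1_l; apply dist1_coord; auto.
Qed.

Lemma locally_lipschitz_plus f g V : locally_lipschitz f V -> locally_lipschitz g V ->
  locally_lipschitz (fun W => f W + g W) V.
Proof.
  intros (rf & Lf & Hrf & HLf & Hf) (rg & Lg & Hrg & HLg & Hg).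
  exists (Rmin rf rg), (Lf + Lg); repeat split; try lra; [apply Rmin_pos; auto|].
  intros W W' HW HW'; pose proof (Rmin_l rf rg); pose proof (Rmin_r rf rg).
  pose proof (Hf W W' ltac:(lra) ltac:(lra)); pose proof (Hg W W' ltac:(lra) ltac:(lra)).
  replace (f W + g W - (f W' + g W')) with ((f W - f W') + (g W - g W')) by ring.
  eapply Rle_trans; [apply Rabs_triang | lra].
Qed.

Lemma locally_lipschitz_opp f V : locally_lipschitz f V -> locally_lipschitz (fun W => - f W) V.
Proof.
  intros (r & L & Hr & HL & Hf); exists r, L; repeat split; auto; intros W W' HW HW'.
  replace (- f W - - f W') with (- (f W - f W')) by ring; rewrite Rabs_Ropp; auto.
Qed.

Lemma locally_lipschitz_minus f g V : locally_lipschitz f V -> locally_lipschitz g V ->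
  locally_lipschitz (fun W => f W - g W) V.
Proof. intros; apply locally_lipschitz_plus, locally_lipschitz_opp; auto. Qed.

Lemma locally_lipschitz_mult f g V : locally_lipschitz f V -> locally_lipschitz g V ->
  locally_lipschitz (fun W => f W * g W) V.
Proof.
  intros Hf0 Hg0.
  destruct (locally_lipschitz_ball f V 1 Hf0 Rlt_0_1) as (rf & Lf & Hrf & HLf & Hf & Bf).
  destruct (locally_lipschitz_ball g V 1 Hg0 Rlt_0_1) as (rg & Lg & Hrg & HLg & Hg & Bg).
  set (Mf := Rabs (f V) + 1); set (Mg := Rabs (g V) + 1).
  assert (HMf : 0 <= Mf) by (pose proof (Rabs_pos (f V)); unfold Mf; lra).
  assert (HMg : 0 <= Mg) by (pose proof (Rabs_pos (g V)); unfold Mg; lra).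
  exists (Rmin rf rg), (Mf * Lg + Mg * Lf); split; [apply Rmin_pos; auto|split; [nra|]].
  intros W W' HW HW'; pose proof (Rmin_l rf rg); pose proof (Rmin_r rf rg).
  assert (HfW : Rabs (f W) <= Mf).
  { pose proof (Bf W ltac:(lra)); pose proof (Rabs_triang_inv (f W) (f V)); unfold Mf; lra. }
  assert (HgW' : Rabs (g W') <= Mg).
  { pose proof (Bg W' ltac:(lra)); pose proof (Rabs_triang_inv (g W') (g V)); unfold Mg; lra. }
  pose proof (Hf W W' ltac:(lra) ltac:(lra)); pose proof (Hg W W' ltac:(lra) ltac:(lra)).
  replace (f W * g W - f W' * g W') with (f W * (g W - g W') + g W' * (f W - f W')) by ring.
  eapply Rle_trans; [apply Rabs_triang|]; rewrite !Rabs_mult.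
  pose proof (Rabs_pos (g W - g W')); pose proof (Rabs_pos (f W - f W')).
  assert (Rabs (f W) * Rabs (g W - g W') <= Mf * (Lg * dist1 W W'))
    by (apply Rmult_le_compat; auto using Rabs_pos).
  assert (Rabs (g W') * Rabs (f W - f W') <= Mg * (Lf * dist1 W W'))
    by (apply Rmult_le_compat; auto using Rabs_pos).
  lra.
Qed.

Lemma locally_lipschitz_inv f V : locally_lipschitz f V -> f V <> 0 ->
  locally_lipschitz (fun W => / f W) V.
Proof.
  intros Hf0 Hne; set (a := Rabs (f V)).
  assert (Ha : 0 < a) by (apply Rabs_pos_lt; auto).
  destruct (locally_lipschitz_ball f V (a / 2) Hf0 ltac:(lra)) as (r & L & Hr & HL & Hf & B).
  assert (Hlow : forall W, dist1 W V < r -> a / 2 <= Rabs (f W)).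
  { intros W HW; pose proof (B W HW) as HB; rewrite Rabs_minus_sym in HB.
    pose proof (Rabs_triang_inv (f V) (f V - f W)) as T.
    replace (f V - (f V - f W)) with (f W) in T by ring; unfold a in *; lra. }
  exists r, (L * (4 / (a * a))); split; auto; split.
  { apply Rmult_le_pos; auto; apply Rlt_le, Rdiv_lt_0_compat; nra. }
  intros W W' HW HW'; pose proof (Hlow W HW); pose proof (Hlow W' HW').
  assert (Hprod : a / 2 * (a / 2) <= Rabs (f W) * Rabs (f W')) by (apply Rmult_le_compat; lra).
  assert (HfW : f W <> 0) by (intros E; rewrite E, Rabs_R0 in *; lra).
  assert (HfW' : f W' <> 0) by (intros E; rewrite E, Rabs_R0 in *; lra).
  replace (/ f W - / f W') with ((f W' - f W) * / (f W * f W')) by (field; auto).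
  rewrite Rabs_mult, Rabs_inv, Rabs_mult, Rabs_minus_sym.
  assert (Hinv : / (Rabs (f W) * Rabs (f W')) <= 4 / (a * a)).
  { replace (4 / (a * a)) with (/ (a / 2 * (a / 2))) by (field; lra).
    apply Rinv_le_contravar; nra. }
  pose proof (Hf W W' HW HW'); pose proof (Rabs_pos (f W - f W')).
  replace (L * (4 / (a * a)) * dist1 W W') with (L * dist1 W W' * (4 / (a * a))) by ring.
  apply Rmult_le_compat; auto.
  apply Rlt_le, Rinv_0_lt_compat; nra.
Qed.

Lemma locally_lipschitz_div f g V : locally_lipschitz f V -> locally_lipschitz g V ->
  g V <> 0 -> locally_lipschitz (fun W => f W / g W) V.
Proof. intros; apply locally_lipschitz_mult, locally_lipschitz_inv; auto. Qed.

Lemma locally_lipschitz_pow f n V : locally_lipschitz f V ->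
  locally_lipschitz (fun W => f W ^ n) V.
Proof.
  intros Hf; induction n as [|n IH]; simpl.
  - apply locally_lipschitz_const.
  - apply locally_lipschitz_mult; auto.
Qed.

Lemma locally_lipschitz_sqrt f V : locally_lipschitz f V -> 0 < f V ->
  locally_lipschitz (fun W => sqrt (f W)) V.
Proof.
  intros Hf0 Hpos.
  destruct (locally_lipschitz_ball f V (f V / 2) Hf0 ltac:(lra)) as (r & L & Hr & HL & Hf & B).
  assert (Hlow : forall W, dist1 W V < r -> f V / 2 <= f W).
  { intros W HW; pose proof (B W HW) as HB; rewrite Rabs_minus_sym in HB.
    pose proof (Rle_abs (f V - f W)); lra. }
  assert (Hs : 0 < sqrt (f V / 2)) by (apply sqrt_lt_R0; lra).
  assert (Hslow : forall W, dist1 W V < r -> sqrt (f V / 2) <= sqrt (f W))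
    by (intros W HW; apply sqrt_le_1_alt, Hlow, HW).
  exists r, (L / sqrt (f V / 2)); split; auto; split.
  { apply Rmult_le_pos; auto; apply Rlt_le, Rinv_0_lt_compat; lra. }
  intros W W' HW HW'.
  pose proof (Hlow W HW); pose proof (Hlow W' HW').
  pose proof (Hslow W HW); pose proof (Hslow W' HW').
  assert (E : (sqrt (f W) - sqrt (f W')) * (sqrt (f W) + sqrt (f W')) = f W - f W').
  { transitivity (sqrt (f W) * sqrt (f W) - sqrt (f W') * sqrt (f W')); [ring|].
    rewrite !sqrt_sqrt; lra. }
  replace (sqrt (f W) - sqrt (f W')) with ((f W - f W') / (sqrt (f W) + sqrt (f W')))
    by (rewrite <- E; field; lra).
  unfold Rdiv at 1; rewrite Rabs_mult, Rabs_inv, (Rabs_pos_eq (_ + _)) by lra.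
  pose proof (Hf W W' HW HW'); pose proof (Rabs_pos (f W - f W')).
  apply Rle_trans with (L * dist1 W W' * / sqrt (f V / 2)); [|right; unfold Rdiv; ring].
  apply Rmult_le_compat; auto.
  - apply Rlt_le, Rinv_0_lt_compat; lra.
  - apply Rinv_le_contravar; lra.
Qed.

Definition lipschitz_field_on (F : st -> st) (V : st) (r L : R) : Prop :=
  forall W W', dist1 W V < r -> dist1 W' V < r -> dist1 (F W) (F W') <= L * dist1 W W'.

Lemma locally_lipschitz_field F V :
  (forall k, (k < ncoord)%nat -> locally_lipschitz (fun W => F W k) V) ->
  exists r L, 0 < r /\ 0 <= L /\ lipschitz_field_on F V r L.
Proof.
  intros HF.
  assert (Hpartial : forall n, (n < ncoord)%nat -> exists r L, 0 < r /\ 0 <= L /\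
    forall W W', dist1 W V < r -> dist1 W' V < r ->
      sum_f_R0 (fun k => Rabs (F W k - F W' k)) n <= L * dist1 W W').
  { induction n as [|n IH]; intros Hn.
    - destruct (HF 0%nat Hn) as (r & L & Hr & HL & H); exists r, L; auto.
    - destruct (IH ltac:(lia)) as (r1 & L1 & Hr1 & HL1 & H1).
      destruct (HF (S n) Hn) as (r2 & L2 & Hr2 & HL2 & H2).
      exists (Rmin r1 r2), (L1 + L2); split; [apply Rmin_pos; auto | split; [lra|]].
      intros W W' HW HW'; pose proof (Rmin_l r1 r2); pose proof (Rmin_r r1 r2); simpl.
      pose proof (H1 W W' ltac:(lra) ltac:(lra)); pose proof (H2 W W' ltac:(lra) ltac:(lra)).
      lra. }
  exact (Hpartial (ncoord - 1)%nat ltac:(unfold ncoord; lia)).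
Qed.

(** * The vector field of (S) is locally Lipschitz *)

Lemma det3_pos M : posdef3 M -> 0 < det3 M.
Proof.
  intros [Hs Hp].
  assert (Hs01 : M 1%nat 0%nat = M 0%nat 1%nat) by (apply Hs; lia).
  pose proof (Hp (fun n => match n with 0%nat => 1 | _ => 0 end) ltac:(left; lra)) as P0.
  unfold sum3 in P0; simpl in P0.
  pose proof (Hp (fun n => match n with 0%nat => M 0%nat 1%nat | 1%nat => - M 0%nat 0%nat
                                       | _ => 0 end) ltac:(right; left; simpl; lra)) as P1.
  unfold sum3 in P1; simpl in P1; rewrite Hs01 in P1.
  assert (Hminor : 0 < M 0%nat 0%nat * M 1%nat 1%nat - M 0%nat 1%nat * M 0%nat 1%nat).
  { apply (Rmult_lt_reg_l (M 0%nat 0%nat)); [lra|]; rewrite Rmult_0_r.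
    eapply Rlt_le_trans; [exact P1|]; right; ring. }
  (* evaluating the form on the third row of the cofactor matrix gives minor * det *)
  pose proof (Hp (cof M 2%nat) ltac:(right; right; unfold cof; simpl; rewrite Hs01; lra)) as P2.
  replace (sum3 (fun i => sum3 (fun j => M i j * cof M 2%nat i * cof M 2%nat j)))
    with (cof M 2%nat 2%nat * det3 M) in P2 by (unfold det3, cof, sum3; simpl; ring).
  unfold cof in P2; simpl in P2; rewrite Hs01 in P2; nra.
Qed.

Lemma u0_radicand_pos V : posdef3 (sg V) ->
  0 < 1 + sum3 (fun i => sum3 (fun j => g_ V i j * u_ V i * u_ V j)).
Proof.
  intros [_ Hp]; unfold g_, u_.
  destruct (classic (su V 0%nat <> 0 \/ su V 1%nat <> 0 \/ su V 2%nat <> 0)) as [Hu|Hu].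
  - pose proof (Hp (su V) Hu); lra.
  - unfold sum3.
    assert (su V 0%nat = 0 /\ su V 1%nat = 0 /\ su V 2%nat = 0) as (-> & -> & ->) by tauto.
    lra.
Qed.

Lemma u0_pos V : posdef3 (sg V) -> 0 < u0 V.
Proof. intros H; apply sqrt_lt_R0, u0_radicand_pos, H. Qed.

Section VectorFieldLipschitz.
Variables (C : StructConst) (Lam : R) (V : st).
Hypotheses (Hg : posdef3 (sg V)) (Hrho : 0 < srho V).

Ltac nonzero :=
  apply Rgt_not_eq; repeat (apply Rmult_lt_0_compat || apply pow_lt);
  first [lra | exact Hrho | apply (det3_pos _ Hg) | apply (u0_pos _ Hg)].

(* [atom] handles the subterms that are neither arithmetic nor coordinates. *)
Ltac lipschitz_with atom :=
  repeat match goal with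
  | |- locally_lipschitz (fun _ => ?c) _ => apply locally_lipschitz_const
  | |- locally_lipschitz (fun _ => _ + _) _ => apply locally_lipschitz_plus
  | |- locally_lipschitz (fun _ => _ - _) _ => apply locally_lipschitz_minus
  | |- locally_lipschitz (fun _ => - _) _ => apply locally_lipschitz_opp
  | |- locally_lipschitz (fun _ => _ * _) _ => apply locally_lipschitz_mult
  | |- locally_lipschitz (fun _ => _ / _) _ => apply locally_lipschitz_div
  | |- locally_lipschitz (fun _ => / _) _ => apply locally_lipschitz_inv
  | |- locally_lipschitz (fun _ => _ ^ _) _ => apply locally_lipschitz_pow
  | |- locally_lipschitz _ _ => first [apply locally_lipschitz_coord | atom]
  end;
  try (unfold ncoord; lia); try nonzero.

Lemma locally_lipschitz_det : locally_lipschitz (fun W => det3 (sg W)) V.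
Proof. unfold det3, cof, sum3; simpl; lipschitz_with fail. Qed.

Lemma locally_lipschitz_gi i j : (i < 3)%nat -> (j < 3)%nat ->
  locally_lipschitz (fun W => gi W i j) V.
Proof.
  intros Hi Hj; unfold gi, inv3.
  destruct i as [|[|[|]]]; try lia; destruct j as [|[|[|]]]; try lia;
    unfold cof; simpl; lipschitz_with ltac:(apply locally_lipschitz_det).
Qed.

Lemma locally_lipschitz_u0 : locally_lipschitz u0 V.
Proof.
  apply locally_lipschitz_sqrt; [|apply u0_radicand_pos, Hg].
  unfold sum3; lipschitz_with fail.
Qed.

Lemma locally_lipschitz_gam l i j : (l < 3)%nat -> (i < 3)%nat -> (j < 3)%nat ->
  locally_lipschitz (fun W => gam C W l i j) V.
Proof. intros; unfold gam, sum3; lipschitz_with ltac:(apply locally_lipschitz_gi). Qed.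

Lemma locally_lipschitz_Ric i j : (i < 3)%nat -> (j < 3)%nat ->
  locally_lipschitz (fun W => Ric C W i j) V.
Proof. intros; unfold Ric, sum3; lipschitz_with ltac:(apply locally_lipschitz_gam). Qed.

Ltac lipschitz :=
  lipschitz_with ltac:(first [ apply locally_lipschitz_gi | apply locally_lipschitz_u0
                             | apply locally_lipschitz_gam | apply locally_lipschitz_Ric ]).

Lemma locally_lipschitz_dg i j : (i < 3)%nat -> (j < 3)%nat ->
  locally_lipschitz (fun W => dg W i j) V.
Proof. intros; unfold dg; lipschitz. Qed.

Lemma locally_lipschitz_dK i j : (i < 3)%nat -> (j < 3)%nat ->
  locally_lipschitz (fun W => dK C Lam W i j) V.
Proof. intros; unfold dK, Hm, Kud, tau, Tij, T00, Th00low, ulow, sum3; lipschitz. Qed.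

Lemma locally_lipschitz_dF i j : (i < 3)%nat -> (j < 3)%nat ->
  locally_lipschitz (fun W => dF C W i j) V.
Proof. intros; unfold dF, sum3; lipschitz. Qed.

Lemma locally_lipschitz_dE i : (i < 3)%nat -> locally_lipschitz (fun W => dE C W i) V.
Proof. intros; unfold dE, Hm, sum3; lipschitz. Qed.

Lemma locally_lipschitz_du i : (i < 3)%nat -> locally_lipschitz (fun W => du C W i) V.
Proof. intros; unfold du, Kud, sum3; lipschitz. Qed.

Lemma locally_lipschitz_dT00 : locally_lipschitz (fun W => dT00 C W) V.
Proof. unfold dT00, Hm, sum3; lipschitz. Qed.

Lemma locally_lipschitz_dT0 i : (i < 3)%nat -> locally_lipschitz (fun W => dT0 C W i) V.
Proof. intros; unfold dT0, Hm, Kud, sum3; lipschitz. Qed.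

Lemma locally_lipschitz_drho : locally_lipschitz (fun W => drho C W) V.
Proof. unfold drho, Hm, sum3; lipschitz. Qed.

Lemma locally_lipschitz_de : locally_lipschitz (fun W => de C W) V.
Proof. unfold de, Hm, sum3; lipschitz. Qed.

Lemma vf_coord_locally_lipschitz k : (k < ncoord)%nat ->
  locally_lipschitz (fun W => vf C Lam W k) V.
Proof.
  unfold ncoord; intros Hk.
  do 39 (destruct k as [|k];
    [ unfold vf; simpl;
      first [ apply locally_lipschitz_dg | apply locally_lipschitz_dK
            | apply locally_lipschitz_dF | apply locally_lipschitz_dE
            | apply locally_lipschitz_du | apply locally_lipschitz_dT00
            | apply locally_lipschitz_dT0 | apply locally_lipschitz_drho
            | apply locally_lipschitz_de ]; lia |]).
  lia.
Qed.

End VectorFieldLipschitz.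

(** * Real induction and a differential Gronwall inequality *)

Lemma real_induction (P : R -> Prop) a b : a <= b ->
  (forall s, a <= s <= b -> (forall u, a <= u < s -> P u) ->
     exists eta, 0 < eta /\ forall u, a <= u < s + eta -> u <= b -> P u) ->
  forall t, a <= t <= b -> P t.
Proof.
  intros Hab Hstep.
  set (E := fun x => a <= x <= b /\ forall u, a <= u <= x -> P u).
  assert (Ea : E a).
  { split; [lra|]; intros u Hu; replace u with a by lra.
    destruct (Hstep a ltac:(lra) ltac:(intros; lra)) as (eta & Heta & H); apply H; lra. }
  destruct (completeness E ltac:(exists b; intros x [Hx _]; lra) (ex_intro _ a Ea))
    as [m [Hub Hlub]].
  assert (Ham : a <= m) by (apply Hub; auto).
  assert (Hmb : m <= b) by (apply Hlub; intros x [Hx _]; lra).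
  assert (Hbelow : forall u, a <= u < m -> P u).
  { intros u Hu; destruct (classic (exists x, E x /\ u < x)) as [[x [[_ Hx] Hux]]|Hn].
    - apply Hx; lra.
    - exfalso; enough (m <= u) by lra.
      apply Hlub; intros x Ex; destruct (Rle_lt_dec x u); auto.
      exfalso; apply Hn; eauto. }
  destruct (Hstep m ltac:(lra) Hbelow) as (eta & Heta & Hbeyond).
  (* m = b, since otherwise min b (m + eta/2) would lie in E *)
  assert (Hm : m = b).
  { destruct (Req_dec m b) as [|Hne]; auto; exfalso.
    set (x := Rmin b (m + eta / 2)).
    assert (x <= b) by apply Rmin_l; assert (x <= m + eta / 2) by apply Rmin_r.
    assert (m < x) by (apply Rmin_glb_lt; lra).
    assert (E x) by (split; [lra | intros u Hu; apply Hbeyond; lra]).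
    pose proof (Hub x ltac:(assumption)); lra. }
  intros t Ht; destruct (Rlt_le_dec t b); [apply Hbelow | apply Hbeyond]; lra.
Qed.

Lemma derivable_pt_lim_sum_f_R0 (f : nat -> R -> R) (df : nat -> R) x n :
  (forall k, (k <= n)%nat -> derivable_pt_lim (f k) x (df k)) ->
  derivable_pt_lim (fun u => sum_f_R0 (fun k => f k u) n) x (sum_f_R0 df n).
Proof.
  induction n as [|n IH]; intros H; simpl; [apply H; lia|].
  apply (derivable_pt_lim_plus (fun u => sum_f_R0 (fun k => f k u) n) (f (S n)));
    [apply IH; intros; apply H | apply H]; lia.
Qed.

Lemma gronwall_differential (h dh : R -> R) M a t : a <= t ->
  (forall u, a < u < t -> derivable_pt_lim h u (dh u)) ->
  (forall u, a <= u <= t -> continuity_pt h u) ->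
  (forall u, a <= u <= t -> dh u <= M * h u) ->
  h t <= h a * exp (M * (t - a)).
Proof.
  intros Hat Hd Hc Hb.
  (* h(u) exp(-M(u-a)) is nonincreasing *)
  set (w := fun u => exp (- M * (u - a))).
  assert (Hw : forall u, derivable_pt_lim w u (- M * w u)).
  { intros u; unfold w; rewrite Rmult_comm.
    apply (derivable_pt_lim_comp (fun u => - M * (u - a)) exp u (- M)); [|apply derivable_pt_lim_exp].
    pose proof (derivable_pt_lim_mult (fun _ => - M) (fun u => u - a) u 0 (1 - 0)
      (derivable_pt_lim_const _ _)
      (derivable_pt_lim_minus id (fun _ => a) u 1 0 (derivable_pt_lim_id u)
         (derivable_pt_lim_const a u))) as Hlin.
    cbv beta in Hlin; replace (0 * (u - a) + - M * (1 - 0)) with (- M) in Hlin by ring.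
    exact Hlin. }
  destruct (Coquelicot.Derive.MVT_gen (fun u => h u * w u) a t
              (fun u => dh u * w u + h u * (- M * w u))) as (c & Hc' & Hmvt).
  { intros u Hu; rewrite Rmin_left, Rmax_right in Hu by lra.
    apply Coquelicot.Derive.is_derive_Reals, derivable_pt_lim_mult; auto; apply Hd; lra. }
  { intros u Hu; rewrite Rmin_left, Rmax_right in Hu by lra.
    apply continuity_pt_mult; [apply Hc; lra|].
    apply derivable_continuous_pt; exists (- M * w u); apply Hw. }
  rewrite Rmin_left, Rmax_right in Hc' by lra.
  assert (Hwc : 0 < w c) by apply exp_pos.
  assert (Hslope : 0 <= (M * h c - dh c) * w c) by (pose proof (Hb c Hc'); apply Rmult_le_pos; lra).
  assert (Hdec : h t * w t <= h a * w a) by nra.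
  unfold w in Hdec; rewrite Rminus_diag, Rmult_0_r, exp_0, Rmult_1_r in Hdec.
  replace (h t) with (h t * exp (- M * (t - a)) * exp (M * (t - a)))
    by (rewrite Rmult_assoc, <- exp_plus; replace (- M * (t - a) + M * (t - a)) with 0 by ring;
        rewrite exp_0; ring).
  apply Rmult_le_compat_r; [apply Rlt_le, exp_pos | exact Hdec].
Qed.

(** * Stability of solutions in a Lipschitz ball *)

Definition solves (F : st -> st) (phi : R -> st) : Prop :=
  (forall k t, (k < ncoord)%nat -> 0 <= t -> forall eps, 0 < eps -> exists delta, 0 < delta /\
     forall s, 0 <= s -> Rabs (s - t) < delta -> Rabs (phi s k - phi t k) < eps) /\
  (forall k t, (k < ncoord)%nat -> 0 < t ->
     derivable_pt_lim (fun s => phi s k) t (F (phi t) k)).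

Lemma solves_dist1_continuous F p s : solves F p -> 0 <= s ->
  forall eps, 0 < eps -> exists delta, 0 < delta /\
    forall u, 0 <= u -> Rabs (u - s) < delta -> dist1 (p u) (p s) < eps.
Proof.
  intros [Hc _] Hs.
  assert (Hpartial : forall n, (n < ncoord)%nat -> forall eps, 0 < eps -> exists delta,
    0 < delta /\ forall u, 0 <= u -> Rabs (u - s) < delta ->
      sum_f_R0 (fun k => Rabs (p u k - p s k)) n < eps).
  { induction n as [|n IH]; intros Hn eps Heps.
    - destruct (Hc 0%nat s Hn Hs eps Heps) as (d & Hd & H); exists d; auto.
    - destruct (IH ltac:(lia) (eps / 2) ltac:(lra)) as (d1 & Hd1 & H1).
      destruct (Hc (S n) s Hn Hs (eps / 2) ltac:(lra)) as (d2 & Hd2 & H2).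
      exists (Rmin d1 d2); split; [apply Rmin_pos; auto|]; intros u Hu Hud.
      pose proof (Rmin_l d1 d2); pose proof (Rmin_r d1 d2); simpl.
      pose proof (H1 u Hu ltac:(lra)); pose proof (H2 u Hu ltac:(lra)); lra. }
  exact (Hpartial (ncoord - 1)%nat ltac:(unfold ncoord; lia)).
Qed.

(* Extending a function on [0, oo) by its value at 0 makes one-sided
   continuity at 0 an honest [continuity_pt]. *)
Lemma continuity_pt_Rmax0 (f : R -> R) t : 0 <= t ->
  (forall eps, 0 < eps -> exists delta, 0 < delta /\
     forall s, 0 <= s -> Rabs (s - t) < delta -> Rabs (f s - f t) < eps) ->
  continuity_pt (fun s => f (Rmax 0 s)) t.
Proof.
  intros Ht Hc eps Heps; destruct (Hc eps Heps) as (d & Hd & H).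
  exists d; split; auto; intros x [_ Hx]; simpl in *; unfold R_dist in *.
  rewrite (Rmax_right 0 t Ht); apply H; [apply Rmax_l|].
  eapply Rle_lt_trans; [|exact Hx]; unfold Rmax; destruct (Rle_dec 0 x); [lra|].
  rewrite !Rabs_left1; lra.
Qed.

Lemma derivable_pt_lim_Rmax0 (f : R -> R) t l : 0 < t ->
  derivable_pt_lim f t l -> derivable_pt_lim (fun s => f (Rmax 0 s)) t l.
Proof.
  intros Ht Hd eps Heps; destruct (Hd eps Heps) as [d H].
  assert (Hp : 0 < Rmin d t) by (apply Rmin_pos; [apply cond_pos | lra]).
  exists (mkposreal _ Hp); intros h Hh Hhd; simpl in Hhd.
  pose proof (Rmin_l d t); pose proof (Rmin_r d t); apply Rabs_def2 in Hhd.
  rewrite (Rmax_right 0 t), (Rmax_right 0 (t + h)) by lra.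
  apply H; auto; apply Rabs_def1; lra.
Qed.

Definition sqdist (W V : st) : R :=
  sum_f_R0 (fun k => (W k - V k) * (W k - V k)) (ncoord - 1).

Lemma sqdist_le_dist1_sqr W V : sqdist W V <= dist1 W V ^ 2.
Proof. apply (sum_sqr_le_sqr_sum_abs (fun k => W k - V k)). Qed.

Lemma dist1_sqr_le_sqdist W V : dist1 W V ^ 2 <= 39 * sqdist W V.
Proof.
  pose proof (sqr_sum_abs_le (fun k => W k - V k) (ncoord - 1)) as H.
  replace (INR (S (ncoord - 1))) with 39 in H by (simpl; ring); exact H.
Qed.

(* The derivative of [sqdist] along two trajectories of [F]. *)
Definition sqdist_rate (F : st -> st) (W W' : st) : R :=
  2 * sum_f_R0 (fun k => (W k - W' k) * (F W k - F W' k)) (ncoord - 1).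

Lemma sqdist_rate_le F V r L W W' : 0 <= L -> lipschitz_field_on F V r L ->
  dist1 W V < r -> dist1 W' V < r -> sqdist_rate F W W' <= 78 * L * sqdist W W'.
Proof.
  intros HL HF HW HW'; unfold sqdist_rate.
  pose proof (HF W W' HW HW'); pose proof (dist1_nonneg W W').
  pose proof (dist1_sqr_le_sqdist W W').
  assert (Hprod : sum_f_R0 (fun k => (W k - W' k) * (F W k - F W' k)) (ncoord - 1)
                  <= dist1 W W' * dist1 (F W) (F W'))
    by exact (sum_mul_le_mul_sum_abs (fun k => W k - W' k) (fun k => F W k - F W' k) _).
  assert (dist1 W W' * dist1 (F W) (F W') <= dist1 W W' * (L * dist1 W W'))
    by (apply Rmult_le_compat_l; auto).
  assert (L * dist1 W W' ^ 2 <= L * (39 * sqdist W W')) by (apply Rmult_le_compat_l; auto).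
  nra.
Qed.

Lemma solves_sqdist_derivable F p1 p0 u : solves F p1 -> solves F p0 -> 0 < u ->
  derivable_pt_lim (fun s => sqdist (p1 (Rmax 0 s)) (p0 (Rmax 0 s))) u
    (sqdist_rate F (p1 u) (p0 u)).
Proof.
  intros [_ Hd1] [_ Hd0] Hu.
  set (x := fun k s => p1 (Rmax 0 s) k - p0 (Rmax 0 s) k).
  replace (sqdist_rate F (p1 u) (p0 u)) with (sum_f_R0 (fun k =>
      (F (p1 u) k - F (p0 u) k) * x k u + x k u * (F (p1 u) k - F (p0 u) k)) (ncoord - 1))
    by (unfold sqdist_rate, x; rewrite Rmax_right, scal_sum by lra;
        apply sum_eq; intros; ring).
  apply (derivable_pt_lim_sum_f_R0 (fun k s => x k s * x k s)); intros k Hk.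
  assert (Hk' : (k < ncoord)%nat) by (unfold ncoord in *; simpl in Hk; lia).
  assert (Hx : derivable_pt_lim (x k) u (F (p1 u) k - F (p0 u) k)).
  { apply (derivable_pt_lim_minus (fun s => p1 (Rmax 0 s) k) (fun s => p0 (Rmax 0 s) k)).
    - apply (derivable_pt_lim_Rmax0 (fun z => p1 z k)); auto.
    - apply (derivable_pt_lim_Rmax0 (fun z => p0 z k)); auto. }
  exact (derivable_pt_lim_mult (x k) (x k) u _ _ Hx Hx).
Qed.

Lemma solves_sqdist_continuous F p1 p0 u : solves F p1 -> solves F p0 -> 0 <= u ->
  continuity_pt (fun s => sqdist (p1 (Rmax 0 s)) (p0 (Rmax 0 s))) u.
Proof.
  intros [Hc1 _] [Hc0 _] Hu.
  apply (continuity_pt_finite_SF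
           (fun k s => (p1 (Rmax 0 s) k - p0 (Rmax 0 s) k) * (p1 (Rmax 0 s) k - p0 (Rmax 0 s) k)));
    intros k Hk.
  assert (Hk' : (k < ncoord)%nat) by (unfold ncoord in *; simpl in Hk; lia).
  assert (Hx : continuity_pt (fun s => p1 (Rmax 0 s) k - p0 (Rmax 0 s) k) u).
  { apply (continuity_pt_minus (fun s => p1 (Rmax 0 s) k) (fun s => p0 (Rmax 0 s) k)).
    - apply (continuity_pt_Rmax0 (fun z => p1 z k)); auto.
    - apply (continuity_pt_Rmax0 (fun z => p0 z k)); auto. }
  exact (continuity_pt_mult _ _ u Hx Hx).
Qed.

Lemma solves_dist1_gronwall F p1 p0 V r L a t :
  solves F p1 -> solves F p0 -> 0 <= L -> lipschitz_field_on F V r L -> 0 <= a <= t ->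
  (forall u, a <= u <= t -> dist1 (p1 u) V < r /\ dist1 (p0 u) V < r) ->
  dist1 (p1 t) (p0 t) ^ 2 <= 39 * exp (78 * L * (t - a)) * dist1 (p1 a) (p0 a) ^ 2.
Proof.
  intros Hs1 Hs0 HL HF Hat Hball.
  pose proof (gronwall_differential (fun s => sqdist (p1 (Rmax 0 s)) (p0 (Rmax 0 s)))
                (fun s => sqdist_rate F (p1 s) (p0 s)) (78 * L) a t) as Hgr.
  cbv beta in Hgr; rewrite (Rmax_right 0 t), (Rmax_right 0 a) in Hgr by lra.
  assert (Hsq : sqdist (p1 t) (p0 t) <= sqdist (p1 a) (p0 a) * exp (78 * L * (t - a))).
  { apply Hgr; [lra | | |].
    - intros u Hu; apply solves_sqdist_derivable; auto; lra.
    - intros u Hu; apply (solves_sqdist_continuous F); auto; lra.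
    - intros u Hu; rewrite Rmax_right by lra; destruct (Hball u Hu).
      apply (sqdist_rate_le F V r); auto. }
  pose proof (dist1_sqr_le_sqdist (p1 t) (p0 t)); pose proof (sqdist_le_dist1_sqr (p1 a) (p0 a)).
  pose proof (exp_pos (78 * L * (t - a))); nra.
Qed.

Lemma exp_le_compat x y : x <= y -> exp x <= exp y.
Proof.
  intros H; destruct (Rle_lt_or_eq_dec x y H) as [Hlt | ->];
    [apply Rlt_le, exp_increasing, Hlt | lra].
Qed.

Lemma solves_dist1_stays_small F p1 p0 V r L a b m :
  solves F p1 -> solves F p0 -> 0 <= L -> lipschitz_field_on F V r L -> 0 <= a <= b ->
  (forall u, a <= u <= b -> dist1 (p0 u) V < r / 4) -> 0 < m <= r / 2 ->
  39 * exp (78 * L * (b - a)) * dist1 (p1 a) (p0 a) ^ 2 < m ^ 2 ->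
  forall t, a <= t <= b -> dist1 (p1 t) (p0 t) < m.
Proof.
  intros Hs1 Hs0 HL HF Hab Hp0 Hm Hsmall.
  assert (Hsq : forall t, dist1 (p1 t) (p0 t) ^ 2 < m ^ 2 -> dist1 (p1 t) (p0 t) < m)
    by (intros t H; pose proof (dist1_nonneg (p1 t) (p0 t)); nra).
  assert (Hgrowth : forall t, a <= t <= b ->
            39 * exp (78 * L * (t - a)) * dist1 (p1 a) (p0 a) ^ 2 < m ^ 2).
  { intros t Ht; eapply Rle_lt_trans; [|exact Hsmall].
    apply Rmult_le_compat_r; [apply pow2_ge_0|].
    apply Rmult_le_compat_l; [lra|]; apply exp_le_compat, Rmult_le_compat_l; lra. }
  assert (Hinside : forall t, a <= t <= b -> dist1 (p1 t) (p0 t) < m ->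
                      dist1 (p1 t) V < 3 * r / 4)
    by (intros t Ht H; pose proof (dist1_triangle (p1 t) (p0 t) V); pose proof (Hp0 t Ht); lra).
  apply real_induction; [lra|]; intros s Hs IH.
  destruct (solves_dist1_continuous F p1 s Hs1 ltac:(lra) (r / 8) ltac:(lra))
    as (eta & Heta & Hnear).
  (* a point tau slightly before s where p1 is known to be inside the ball *)
  set (tau := Rmax a (s - eta / 2)).
  assert (Htau : a <= tau <= s /\ Rabs (tau - s) < eta).
  { unfold tau, Rmax; destruct (Rle_dec a (s - eta / 2)); split; try split; try lra;
      apply Rabs_def1; lra. }
  assert (Htau_in : dist1 (p1 tau) V < 3 * r / 4).
  { apply Hinside; [lra|]; destruct (Rlt_le_dec tau s) as [Hlt|Hge]; [apply IH; lra|].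
    assert (Hta : tau = a) by (unfold tau, Rmax in *; destruct (Rle_dec a (s - eta / 2)); lra).
    rewrite Hta; apply Hsq.
    pose proof (Hgrowth a ltac:(lra)); pose proof (pow2_ge_0 (dist1 (p1 a) (p0 a))).
    rewrite Rminus_diag, Rmult_0_r, exp_0 in *; lra. }
  exists eta; split; auto; intros u Hu Hub; apply Hsq.
  eapply Rle_lt_trans; [|apply (Hgrowth u); lra].
  apply (solves_dist1_gronwall F p1 p0 V r L a u Hs1 Hs0 HL HF); [lra|].
  intros v Hv; split; [|pose proof (Hp0 v ltac:(lra)); lra].
  destruct (Rlt_le_dec v s).
  { enough (dist1 (p1 v) V < 3 * r / 4) by lra; apply Hinside, IH; lra. }
  pose proof (Hnear v ltac:(lra) ltac:(apply Rabs_def1; lra)) as Hvs.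
  pose proof (Hnear tau ltac:(lra) ltac:(lra)) as Htaus; rewrite dist1_sym in Htaus.
  pose proof (dist1_triangle (p1 v) (p1 s) V); pose proof (dist1_triangle (p1 s) (p1 tau) V).
  lra.
Qed.

(** * Continuous dependence on the initial data *)

Definition depends_continuously_until (P : st -> Prop) (S : st -> R -> st) (V0 : st) (T : R) :=
  forall eps, 0 < eps -> exists delta, 0 < delta /\
    forall V1, P V1 -> dist1 V1 V0 < delta ->
    forall t, 0 <= t <= T -> dist1 (S V1 t) (S V0 t) < eps.

Lemma exists_scaled_sqr_lt G m : 0 <= G -> 0 < m -> exists e, 0 < e <= m /\ G * e ^ 2 < m ^ 2.
Proof.
  intros HG Hm; exists (m / (G + 1)).
  assert (He : m / (G + 1) * (G + 1) = m) by (field; lra).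
  assert (0 < m / (G + 1)) by (apply Rdiv_lt_0_compat; lra).
  split; [split|]; nra.
Qed.

Section ContinuousDependence.
Variables (F : st -> st) (P : st -> Prop) (S : st -> R -> st) (V0 : st).
Hypotheses (HS : forall V, P V -> solves F (S V))
           (HS0 : forall V, P V -> forall k, (k < ncoord)%nat -> S V 0 k = V k)
           (HP0 : P V0)
           (HF : forall s, 0 <= s ->
                   exists r L, 0 < r /\ 0 <= L /\ lipschitz_field_on F (S V0 s) r L).

Lemma depends_continuously_until_0 : depends_continuously_until P S V0 0.
Proof.
  intros eps Heps; exists eps; split; auto; intros V1 HV1 Hd t Ht.
  replace t with 0 by lra; erewrite dist1_ext; [exact Hd|].
  intros k Hk; split; [apply HS0 | apply HS0]; auto.
Qed.

Lemma depends_continuously_until_extend s : 0 <= s ->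
  (forall tau, 0 <= tau < s -> depends_continuously_until P S V0 tau) ->
  exists eta, 0 < eta /\ forall u, s <= u < s + eta -> depends_continuously_until P S V0 u.
Proof.
  intros Hs IH.
  destruct (HF s Hs) as (r & L & Hr & HL & HFs).
  destruct (solves_dist1_continuous F (S V0) s (HS V0 HP0) Hs (r / 4) ltac:(lra))
    as (eta & Heta & Hnear).
  set (tau := Rmax 0 (s - eta / 2)).
  assert (Htau : 0 <= tau <= s /\ s - eta / 2 <= tau).
  { unfold tau, Rmax; destruct (Rle_dec 0 (s - eta / 2)); lra. }
  assert (IHtau : depends_continuously_until P S V0 tau).
  { destruct (Rlt_le_dec tau s) as [Hlt|Hge]; [apply IH; lra|].
    replace tau with 0 by (unfold tau, Rmax in *; destruct (Rle_dec 0 (s - eta / 2)); lra).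
    apply depends_continuously_until_0. }
  exists (eta / 2); split; [lra|]; intros u Hu eps Heps.
  set (m := Rmin eps (r / 2)).
  assert (Hm : 0 < m <= r / 2) by (split; [apply Rmin_pos | apply Rmin_r]; lra).
  assert (Hme : m <= eps) by apply Rmin_l.
  set (G := 39 * exp (78 * L * (s + eta / 2 - tau))).
  destruct (exists_scaled_sqr_lt G m ltac:(pose proof (exp_pos (78 * L * (s + eta / 2 - tau))); unfold G; lra)
              (proj1 Hm)) as (e & He & HGe).
  destruct (IHtau e (proj1 He)) as (delta & Hdelta & Hclose).
  exists delta; split; auto; intros V1 HV1 Hd1 t Ht.
  destruct (Rle_lt_dec t tau); [pose proof (Hclose V1 HV1 Hd1 t ltac:(lra)); lra|].
  enough (dist1 (S V1 t) (S V0 t) < m) by lra.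
  apply (solves_dist1_stays_small F (S V1) (S V0) (S V0 s) r L tau (s + eta / 2) m);
    auto; try lra.
  - intros v Hv; apply Hnear; [lra | apply Rabs_def1; lra].
  - pose proof (Hclose V1 HV1 Hd1 tau ltac:(lra)); pose proof (dist1_nonneg (S V1 tau) (S V0 tau)).
    fold G; apply Rle_lt_trans with (G * e ^ 2); [|exact HGe].
    apply Rmult_le_compat_l; [unfold G; pose proof (exp_pos (78 * L * (s + eta / 2 - tau))); lra|].
    apply pow_incr; lra.
Qed.

Lemma depends_continuously T : 0 <= T -> depends_continuously_until P S V0 T.
Proof.
  intros HT; apply (real_induction _ 0 T HT); [|lra].
  intros s Hs IH; destruct (depends_continuously_until_extend s ltac:(lra)) as (eta & Heta & H).
  { intros tau Htau; apply IH; lra. }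
  exists eta; split; auto; intros u Hu _.
  destruct (Rlt_le_dec u s); [apply IH | apply H]; lra.
Qed.

End ContinuousDependence.

Theorem theorem8p1 (C : StructConst) (Lam : R)
  (HC : bianchi_I_to_VIII C) (HLam : 0 < Lam)
  (S : st -> R -> st)
  (HS : forall V0, admissible C Lam V0 -> global_solution C Lam (S V0) V0) :
  forall V0, admissible C Lam V0 ->
  forall T, 0 < T -> forall eps, 0 < eps ->
  exists delta, 0 < delta /\
    forall V1, admissible C Lam V1 -> dist1 V1 V0 < delta ->
    forall t, 0 <= t <= T -> dist1 (S V1 t) (S V0 t) < eps.
Proof.
  intros V0 HV0 T HT.
  apply (depends_continuously (vf C Lam) (admissible C Lam) S V0); auto; try lra.
  - intros V HV; destruct (HS V HV) as (_ & _ & Hc & Hd); split; auto.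
  - intros V HV; apply (HS V HV).
  - intros s Hs; destruct (HS V0 HV0) as (_ & Hdom & _); destruct (Hdom s Hs) as [Hg Hrho].
    apply locally_lipschitz_field; intros k Hk; apply vf_coord_locally_lipschitz; auto.
Qed.
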